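(* Let $d\in\{1,2,3\}$ and let $K\subset M^{m\times n}$ be a $d$-dimensional subspace without Rank-$1$ connections, with $K=P_K(\mathbb{R}^d)$ where $P_K(z)=(a_{ij}\cdot z)_{1\le i\le m,1\le j\le n}$, $a_{ij}\in\mathbb{R}^d$, is a linear isomorphism onto $K$. If $\dim\mathrm{Span}\{a_{i_0l}:l=1,\dots,n\}=1$ for some $i_0$, or $\dim\mathrm{Span}\{a_{lj_0}:l=1,\dots,m\}=1$ for some $j_0$, then there exists $\beta\in\mathbb{R}^{q_0}\setminus\{0\}$ with $\sum_{k=1}^{q_0}\beta_kM_k(X)\ge0$ for all $X\in K$ and $\sum_k\beta_kM_k\not\equiv0$ on $K$, where $M_1,\dots,M_{q_0}$ are all the $2\times2$ minors of $m\times n$ matrices.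
   Context: A set has Rank-$1$ connections if it contains $A\ne B$ with $\mathrm{Rank}(A-B)=1$. *)

From HB Require Import structures.
From mathcomp Require Import all_boot all_order all_algebra.
From mathcomp Require Import reals.
Set Implicit Arguments. Unset Strict Implicit. Unset Printing Implicit Defensive.
Import Order.TTheory GRing.Theory Num.Theory.
Local Open Scope ring_scope.

Definition PK (R : realType) (m n d : nat) (a : 'I_m -> 'I_n -> 'rV[R]_d)
  (z : 'rV[R]_d) : 'M[R]_(m, n) :=
  \matrix_(i < m, j < n) \sum_(k < d) a i j 0 k * z 0 k.

Definition minor_idx (m n : nat) : pred (('I_m * 'I_m) * ('I_n * 'I_n)) :=
  fun k => ((k.1.1 < k.1.2)%N && (k.2.1 < k.2.2)%N).

Definition minor2 (R : realType) (m n : nat) (X : 'M[R]_(m, n))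
  (k : ('I_m * 'I_m) * ('I_n * 'I_n)) : R :=
  X k.1.1 k.2.1 * X k.1.2 k.2.2 - X k.1.1 k.2.2 * X k.1.2 k.2.1.

Definition minor_comb (R : realType) (m n : nat)
  (beta : ('I_m * 'I_m) * ('I_n * 'I_n) -> R) (X : 'M[R]_(m, n)) : R :=
  \sum_(k | minor_idx k) beta k * minor2 X k.

From HB Require Import structures.
From mathcomp Require Import all_boot all_order all_algebra.
From mathcomp Require Import reals.
From mathcomp Require Import ring.
Set Implicit Arguments. Unset Strict Implicit. Unset Printing Implicit Defensive.
Import Order.TTheory GRing.Theory Num.Theory.
Local Open Scope ring_scope.

(* Suppose row i0 of (a_ij) has rank one, so a_{i0 j} = c_j v with v <> 0; the
   column case reduces to it by transposition.  Every 2x2 minor of P_K(z) that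
   uses row i0 factors as (v.z)(w_t.z) for explicit vectors w_t.  If v is a
   linear combination sum_t u_t w_t, then sum_t u_t M_t = (v.z)^2 on K, which is
   nonnegative and not identically zero.  Otherwise some z has v.z <> 0 and
   w_t.z = 0 for all t; then every row of P_K(z) is proportional to its nonzero
   row i0, so P_K(z) = P_K(z) - P_K(0) has rank one, a rank-one connection. *)

Definition dot (R : pzRingType) (d : nat) (u z : 'rV[R]_d) : R := (u *m z^T) 0 0.

Section Dot.
Variables (R : pzRingType) (d : nat).
Implicit Types u w z : 'rV[R]_d.

Lemma dotDl u w z : dot (u + w) z = dot u z + dot w z.
Proof. by rewrite /dot mulmxDl mxE. Qed.

Lemma dotNl u z : dot (- u) z = - dot u z.
Proof. by rewrite /dot mulNmx mxE. Qed.

Lemma dotBl u w z : dot (u - w) z = dot u z - dot w z.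
Proof. by rewrite dotDl dotNl. Qed.

Lemma dotZl (c : R) u z : dot (c *: u) z = c * dot u z.
Proof. by rewrite /dot -scalemxAl mxE. Qed.

Lemma dot_suml (I : finType) (P : pred I) (F : I -> 'rV[R]_d) z :
  dot (\sum_(i | P i) F i) z = \sum_(i | P i) dot (F i) z.
Proof. by rewrite /dot mulmx_suml summxE. Qed.

End Dot.

Lemma dot_self_neq0 (R : realDomainType) d (v : 'rV[R]_d) : v != 0 -> dot v v != 0.
Proof.
apply: contraNN => /eqP vv0; apply/eqP/rowP => k; rewrite mxE.
have sq_ge0 i : true -> 0 <= v 0 i * v^T i 0 by rewrite mxE -expr2 sqr_ge0.
move: vv0; rewrite /dot mxE => /(psumr_eq0P sq_ge0)/(_ k isT)/eqP.
by rewrite mxE mulf_eq0 orbb => /eqP.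
Qed.

Lemma PKE (R : realType) m n d (a : 'I_m -> 'I_n -> 'rV[R]_d) z i j :
  PK a z i j = dot (a i j) z.
Proof. by rewrite /PK /dot !mxE; apply: eq_bigr => k _; rewrite !mxE. Qed.

Lemma PK0 (R : realType) m n d (a : 'I_m -> 'I_n -> 'rV[R]_d) : PK a 0 = 0.
Proof. by apply/matrixP => i j; rewrite PKE /dot trmx0 mulmx0 !mxE. Qed.

Lemma combination_or_separating_form (F : fieldType) d (T : finType) (P : pred T)
    (W : T -> 'rV[F]_d) (v : 'rV[F]_d) :
  (exists u : T -> F, v = \sum_(t | P t) u t *: W t) \/
  (exists z, dot v z != 0 /\ forall t, P t -> dot (W t) z = 0).
Proof.
pose Wm := \matrix_(r < #|T|) (if P (enum_val r) then W (enum_val r) else 0).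
have rowWm t : row (enum_rank t) Wm = if P t then W t else 0.
  by rewrite rowK enum_rankK.
have [/submxP[u ->]|] := boolP (v <= Wm)%MS.
  left; exists (fun t => u 0 (enum_rank t)).
  rewrite mulmx_sum_row (reindex _ (onW_bij _ (enum_rank_bij T))) [RHS]big_mkcond /=.
  by apply: eq_bigr => t _; rewrite rowWm; case: ifP; rewrite ?scaler0.
rewrite submxE => /rV0Pn[k vCk].
right; exists (col k (cokermx Wm))^T.
have dotE w : dot w (col k (cokermx Wm))^T = (w *m cokermx Wm) 0 k.
  by rewrite /dot trmxK !mxE; apply: eq_bigr => j _; rewrite mxE.
split=> [|t Pt]; first by rewrite dotE.
have -> : W t = row (enum_rank t) Wm by rewrite rowWm Pt.
by rewrite dotE -row_mul mulmx_coker row0 mxE.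
Qed.

Lemma rank1_rows_multiple (F : fieldType) p q (A : 'M[F]_(p, q)) :
  \rank A = 1%N ->
  exists l (c : 'I_p -> F), row l A != 0 /\ forall j, row j A = c j *: row l A.
Proof.
move=> rkA; have /existsP[l Al] : [exists l, row l A != 0].
  move/eqP: rkA; apply: contraTT => /existsPn rows0.
  suff -> : A = 0 by rewrite mxrank0.
  by apply/row_matrixP => l; rewrite row0; apply/eqP/negbNE/rows0.
have Asub : (A <= row l A)%MS.
  by rewrite -(mxrank_leqif_sup (row_sub l A)).2 rank_rV Al rkA.
have [D defA] := submxP Asub.
exists l, (fun j => D j 0); split=> // j.
by rewrite {1}defA row_mul (mx11_scalar (row j D)) mul_scalar_mx mxE.
Qed.

Lemma rank1_of_proportional_rows (F : fieldType) p q (X : 'M[F]_(p, q)) i0 l :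
  X i0 l != 0 -> (forall i j1 j2, X i0 j1 * X i j2 = X i0 j2 * X i j1) ->
  \rank X = 1%N.
Proof.
move=> Xl prop; have X_neq0 : X != 0 by apply: contraNneq Xl => ->; rewrite mxE.
have defX : X = (\col_i (X i l / X i0 l)) *m row i0 X.
  apply/matrixP => i j; rewrite mxE big_ord1 !mxE.
  by apply: (mulfI Xl); rewrite prop; field.
apply/eqP; rewrite eqn_leq lt0n mxrank_eq0 X_neq0 andbT defX.
exact: leq_trans (mxrankM_maxl _ _) (rank_leq_col _).
Qed.

Lemma proportional_rows_of_minors (R : realType) m n (X : 'M[R]_(m, n)) i0 :
  (forall k, minor_idx k -> (k.1.1 == i0) || (k.1.2 == i0) -> minor2 X k = 0) ->
  forall i j1 j2, X i0 j1 * X i j2 = X i0 j2 * X i j1.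
Proof.
move=> minor0 i j1 j2.
wlog lt12 : j1 j2 / (j1 < j2)%N.
  by move=> sym; case: (ltngtP j1 j2) => [/sym|/sym/esym|/val_inj->].
apply/eqP; rewrite -subr_eq0.
have [lt|gt|/val_inj<-] := ltngtP i0 i; last by rewrite [X i0 j2 * _]mulrC subrr.
- have := minor0 ((i0, i), (j1, j2)); rewrite /minor_idx lt lt12 eqxx.
  by move=> /(_ isT isT)/eqP.
- have := minor0 ((i, i0), (j1, j2)); rewrite /minor_idx gt lt12 eqxx orbT.
  move=> /(_ isT isT); rewrite /minor2 /= => Mi.
  by rewrite -oppr_eq0 -Mi; apply/eqP; ring.
Qed.

Definition no_rank_one (R : realType) m n d (a : 'I_m -> 'I_n -> 'rV[R]_d) : Prop :=
  forall z, PK a z != 0 -> \rank (PK a z) != 1%N.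

Definition has_nonneg_minor_comb (R : realType) m n d
    (a : 'I_m -> 'I_n -> 'rV[R]_d) : Prop :=
  exists beta : ('I_m * 'I_m) * ('I_n * 'I_n) -> R,
    (forall k, ~~ minor_idx k -> beta k = 0) /\
    (exists k, minor_idx k /\ beta k != 0) /\
    (forall z : 'rV[R]_d, 0 <= minor_comb beta (PK a z)) /\
    (exists z : 'rV[R]_d, minor_comb beta (PK a z) != 0).

Lemma nonneg_minor_comb_of_sqr (R : realType) m n d (a : 'I_m -> 'I_n -> 'rV[R]_d)
    (beta : ('I_m * 'I_m) * ('I_n * 'I_n) -> R) (v : 'rV[R]_d) :
  (forall k, ~~ minor_idx k -> beta k = 0) -> v != 0 ->
  (forall z, minor_comb beta (PK a z) = dot v z ^+ 2) ->
  has_nonneg_minor_comb a.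
Proof.
move=> beta_idx v_neq0 combE.
have comb_v : minor_comb beta (PK a v) != 0 by rewrite combE sqrf_eq0 dot_self_neq0.
exists beta; split=> //; split; last by split=> [z|]; [rewrite combE sqr_ge0 | exists v].
have [k /andP[idx bk]|beta0] := pickP (fun k => minor_idx k && (beta k != 0)).
  by exists k.
move: comb_v; rewrite /minor_comb big1 ?eqxx // => k idx.
by move: (beta0 k); rewrite idx => /negbFE/eqP->; rewrite mul0r.
Qed.

Section ProportionalRow.
Variables (R : realType) (m n d : nat) (a : 'I_m -> 'I_n -> 'rV[R]_d).
Variables (i0 : 'I_m) (l : 'I_n) (c : 'I_n -> R).
Hypothesis a_i0 : forall j, a i0 j = c j *: a i0 l.
Hypothesis a_i0l_neq0 : a i0 l != 0.

Let g i j1 j2 := c j1 *: a i j2 - c j2 *: a i j1.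

Lemma minor_row_i0E z i j1 j2 :
  PK a z i0 j1 * PK a z i j2 - PK a z i0 j2 * PK a z i j1 =
  dot (a i0 l) z * dot (g i j1 j2) z.
Proof. by rewrite !PKE (a_i0 j1) (a_i0 j2) /g dotBl !dotZl; ring. Qed.

Let W (t : ('I_m * 'I_m) * ('I_n * 'I_n)) :=
  if t.1.1 == i0 then g t.1.2 t.2.1 t.2.2 else - g t.1.1 t.2.1 t.2.2.

Lemma minor2_through_i0E z t : (t.1.1 == i0) || (t.1.2 == i0) ->
  minor2 (PK a z) t = dot (a i0 l) z * dot (W t) z.
Proof.
case: t => [[i1 i2] [j1 j2]] /orP[/eqP/= ->|/eqP/= ->]; rewrite /W /minor2 /=.
  by rewrite eqxx minor_row_i0E.
case: eqP => [->|_]; first by rewrite minor_row_i0E.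
by rewrite dotNl mulrN -minor_row_i0E; ring.
Qed.

Lemma nonneg_minor_comb_of_proportional_row : no_rank_one a -> has_nonneg_minor_comb a.
Proof.
move=> noR1.
pose P (t : ('I_m * 'I_m) * ('I_n * 'I_n)) :=
  minor_idx t && ((t.1.1 == i0) || (t.1.2 == i0)).
have [[u v_comb]|[z [vz Wz]]] := combination_or_separating_form P W (a i0 l).
  apply: (nonneg_minor_comb_of_sqr (beta := fun t => if P t then u t else 0))
    a_i0l_neq0 _ => [t /negbTE idx|z]; first by rewrite /P idx.
  rewrite expr2 {2}v_comb dot_suml mulr_sumr /minor_comb.
  rewrite big_mkcond [RHS]big_mkcond; apply: eq_bigr => t _.
  case Pt: (P t); last by rewrite mul0r; case: ifP.
  case/andP: Pt => -> /minor2_through_i0E ->; rewrite dotZl; ring.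
pose X := PK a z; have Xi0l : X i0 l != 0 by rewrite /X PKE.
have rkX : \rank X = 1%N.
  apply: (rank1_of_proportional_rows Xi0l); apply: proportional_rows_of_minors.
  by move=> t idx through; rewrite minor2_through_i0E // Wz ?mulr0 // /P idx.
have /noR1 : X != 0 by apply: contraNneq Xi0l => ->; rewrite mxE.
by rewrite rkX.
Qed.

End ProportionalRow.

Lemma nonneg_minor_comb_of_rank1_row (R : realType) m n d
    (a : 'I_m -> 'I_n -> 'rV[R]_d) (i0 : 'I_m) :
  no_rank_one a -> \rank (\matrix_(l < n) a i0 l) = 1%N -> has_nonneg_minor_comb a.
Proof.
move=> noR1 /rank1_rows_multiple[l [c [row_l rows]]].
apply: (nonneg_minor_comb_of_proportional_row (i0 := i0) (l := l) (c := c)) noR1.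
  by move=> j; have := rows j; rewrite !rowK.
by rewrite -(rowK (fun l => a i0 l) l).
Qed.

Lemma PK_tr (R : realType) m n d (a : 'I_m -> 'I_n -> 'rV[R]_d) z :
  PK (fun j i => a i j) z = (PK a z)^T.
Proof. by apply/matrixP => j i; rewrite !mxE. Qed.

Lemma no_rank_one_tr (R : realType) m n d (a : 'I_m -> 'I_n -> 'rV[R]_d) :
  no_rank_one a -> no_rank_one (fun j i => a i j).
Proof. by move=> noR1 z; rewrite PK_tr trmx_eq0 mxrank_tr; apply: noR1. Qed.

Lemma minor_comb_tr (R : realType) m n (beta : ('I_n * 'I_n) * ('I_m * 'I_m) -> R)
    (X : 'M[R]_(m, n)) :
  minor_comb beta X^T = minor_comb (fun k => beta (k.2, k.1)) X.
Proof.
rewrite /minor_comb (reindex (fun k => (k.2, k.1))) /=; last first.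
  by apply: onW_bij; exists (fun k => (k.2, k.1)); case.
apply: eq_big => [k|k _]; first by rewrite /minor_idx andbC.
by rewrite /minor2 !mxE; ring.
Qed.

Lemma has_nonneg_minor_comb_tr (R : realType) m n d (a : 'I_m -> 'I_n -> 'rV[R]_d) :
  has_nonneg_minor_comb (fun j i => a i j) -> has_nonneg_minor_comb a.
Proof.
case=> beta [beta_idx [[k [idx bk]] [comb_ge0 [z comb_neq0]]]].
exists (fun k => beta (k.2, k.1)); split; [|split; [|split]].
- by move=> k' idx'; apply: beta_idx; rewrite /minor_idx andbC.
- by exists (k.2, k.1); rewrite /minor_idx andbC; case: k idx bk => [[? ?] [? ?]].
- by move=> z'; rewrite -minor_comb_tr -PK_tr.
- by exists z; rewrite -minor_comb_tr -PK_tr.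
Qed.

Theorem lemma4 (R : realType) (m n d : nat) (a : 'I_m -> 'I_n -> 'rV[R]_d) :
  (1 <= d <= 3)%N ->
  injective (PK a) ->
  (forall z1 z2 : 'rV[R]_d, PK a z1 != PK a z2 ->
     \rank (PK a z1 - PK a z2) != 1%N) ->
  ((exists i0 : 'I_m, \rank (\matrix_(l < n) a i0 l) = 1%N) \/
   (exists j0 : 'I_n, \rank (\matrix_(l < m) a l j0) = 1%N)) ->
  exists beta : ('I_m * 'I_m) * ('I_n * 'I_n) -> R,
    (forall k, ~~ minor_idx k -> beta k = 0) /\
    (exists k, minor_idx k /\ beta k != 0) /\
    (forall z : 'rV[R]_d, 0 <= minor_comb beta (PK a z)) /\
    (exists z : 'rV[R]_d, minor_comb beta (PK a z) != 0).
Proof.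
move=> _ _ no_conn.
have noR1 : no_rank_one a by move=> z; have := no_conn z 0; rewrite PK0 subr0.
case=> [[i0 rk_row]|[j0 rk_col]]; first exact: nonneg_minor_comb_of_rank1_row rk_row.
apply: has_nonneg_minor_comb_tr.
exact: nonneg_minor_comb_of_rank1_row (no_rank_one_tr noR1) rk_col.
Qed.
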